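(* For every positively oriented $J$-basis $E$ of $\mathbb{R}^{2n,2n-1}$, the complement $\mathbb{R}^{4n-1}\setminus\mathcal{H}_E$ of the open crooked halfspace of $E$ equals the closed crooked halfspace $\overline{\mathcal{H}}_{\widehat E}$ of the opposite basis.
   Context: $\mathbb{R}^{2n,2n-1}$ is $\mathbb{R}^{4n-1}$ with form $v^TJw$, $J$ antidiagonal with $J_{i,4n-i}=(-1)^i$; a $J$-basis is one in which the Gram matrix is $J$. For $E=(e_1,\dots,e_{4n-1})$, the opposite basis is $\widehat E=(e_{4n-1},-e_{4n-2},e_{4n-3},\dots,-e_2,e_1)$. For a nonzero vector $v$, $S^+_E(v)$ (resp. $S^-_E(v)$) is the number of sign changes of its coordinate sequence in $E$ when signs are assigned to zero coordinates so as to maximize (resp. minimize) this number. $\mathcal{H}_E=\{v: S^+_E(v)\le 2n-1$, and in case of equality the sign of the last coordinate used in computing $S^+_E$ is positive$\}$; $\overline{\mathcal{H}}_E=\{v: S^-_E(v)\le 2n-1$, and in case of equality the last nonzero coordinate is positive$\}$. *)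

From HB Require Import structures.
From mathcomp Require Import all_boot all_order all_algebra.
From mathcomp Require Import reals.
Set Implicit Arguments. Unset Strict Implicit. Unset Printing Implicit Defensive.
Import Order.TTheory GRing.Theory Num.Theory.
Local Open Scope ring_scope.

Section Crooked.
Variable R : realType.

Definition sgn_compat (c : seq R) (s : seq bool) : bool :=
  all2 (fun x b => ((0 < x) ==> b) && ((x < 0) ==> ~~ b)) c s.

Definition nchanges (s : seq bool) : nat :=
  count (fun p => p.1 != p.2) (zip s (behead s)).

Definition Splus (c : seq R) : nat :=
  \max_(s : (size c).-tuple bool | sgn_compat c s) nchanges s.

Definition Sminus (c : seq R) : nat :=
  \big[minn/size c]_(s : (size c).-tuple bool | sgn_compat c s) nchanges s.

(* The form J on R^N (0-indexed): J i j = (-1)^(i+1) if i + j = N - 1,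
   i.e. 1-indexed J_{i,4n-i} = (-1)^i when N = 4n-1. *)
Definition Jmat (N : nat) : 'M[R]_N :=
  \matrix_(i < N, j < N) (if (i + j == N.-1)%N then (-1) ^+ i.+1 else 0).

(* E is a J-basis: columns e_1..e_N form a basis with Gram matrix J. *)
Definition is_Jbasis (N : nat) (E : 'M[R]_N) : bool :=
  (E \in unitmx) && (E^T *m Jmat N *m E == Jmat N).

Definition coords (N : nat) (E : 'M[R]_N) (v : 'cV[R]_N) : seq R :=
  [seq (invmx E *m v) i 0 | i <- enum 'I_N].

(* opposite basis: (e_N, -e_{N-1}, e_{N-2}, ..., -e_2, e_1) *)
Definition opp_basis (N : nat) (E : 'M[R]_N) : 'M[R]_N :=
  \matrix_(i < N, j < N) ((-1) ^+ j * E i (rev_ord j)).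

Definition Hopen (n : nat) (E : 'M[R]_((4 * n).-1)) (v : 'cV[R]_((4 * n).-1))
  : Prop :=
  let c := coords E v in
  (Splus c <= (2 * n).-1)%N /\
  (Splus c = (2 * n).-1 ->
     exists s : (size c).-tuple bool,
       [/\ sgn_compat c s, nchanges s = Splus c & last false s = true]).

Definition Hclosed (n : nat) (E : 'M[R]_((4 * n).-1)) (v : 'cV[R]_((4 * n).-1))
  : Prop :=
  let c := coords E v in
  (Sminus c <= (2 * n).-1)%N /\
  (Sminus c = (2 * n).-1 -> 0 < last 0 [seq x <- c | x != 0]).

End Crooked.

From HB Require Import structures.
From mathcomp Require Import all_boot all_order all_algebra.
From mathcomp Require Import reals.
From mathcomp Require Import zify.
Import Order.TTheory GRing.Theory Num.Theory.
Local Open Scope ring_scope.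
Set Implicit Arguments. Unset Strict Implicit.

(** Reversing a coordinate sequence and flipping every second sign turns the
    coordinates of v in E into its coordinates in the opposite basis (because
    4n-1 is odd), and acts likewise on sign assignments. An adjacent pair of
    signs changes in exactly one of s and its image, so S^+_E(v) + S^-_Ê(v) =
    4n-2: one count is below 2n-1 exactly when the other is above it. In the
    case of equality 2n-1 is odd, so a minimising assignment for the opposite
    basis has different first and last signs. Its last sign can be taken to
    be that of the last nonzero coordinate, and its first sign is the last
    sign of the corresponding maximising assignment for E. *)

Lemma last_rev (T : Type) (x : T) s : last x (rev s) = head x s.
Proof. by case: s => //= a s; rewrite rev_cons last_rcons. Qed.

Lemma head_rev (T : Type) (x : T) s : head x (rev s) = last x s.
Proof. by rewrite -[in RHS](revK s) last_rev. Qed.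

Fixpoint altb (s : seq bool) : seq bool :=
  if s is b :: s' then b :: map negb (altb s') else [::].

Lemma size_altb s : size (altb s) = size s.
Proof. by elim: s => //= b s IH; rewrite size_map IH. Qed.

Lemma nth_altb s i : (i < size s)%N -> nth false (altb s) i = nth false s i (+) odd i.
Proof.
elim: s i => [|b s IH] [|i] //= lt_i_s; first by rewrite addbF.
by rewrite (nth_map false) ?size_altb // IH // addbN.
Qed.

Lemma altb_map_negb s : altb (map negb s) = map negb (altb s).
Proof. by elim: s => //= b s ->. Qed.

Lemma altbK : involutive altb.
Proof.
elim=> //= b s IH; rewrite altb_map_negb -map_comp.
by rewrite (@eq_map _ _ _ id) ?map_id ?IH // => x /=; rewrite negbK.
Qed.

Lemma last_altb s : ~~ odd (size s).-1 -> last false (altb s) = last false s.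
Proof.
case: s => // b s even_s; rewrite -!nth_last size_altb nth_altb //.
by rewrite (negbTE even_s) addbF.
Qed.

Lemma nchanges_cons a u :
  nchanges (a :: u) = (((0 < size u)%N && (a != head a u)) + nchanges u)%N.
Proof. by case: u. Qed.

Lemma nchanges_le s : (nchanges s <= size s)%N.
Proof.
rewrite /nchanges; apply: leq_trans (count_size _ _) _.
by rewrite size_zip geq_minl.
Qed.

Lemma nchanges_nseq k b : nchanges (nseq k b) = 0%N.
Proof. by elim: k => // [[|k]] // IH; rewrite nchanges_cons /= eqxx. Qed.

Lemma nchanges_map_negb s : nchanges (map negb s) = nchanges s.
Proof.
elim: s => // a [|c s] IH //.
by rewrite map_cons nchanges_cons [in RHS]nchanges_cons -IH {IH} /=; case: a; case: c.
Qed.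

Lemma nchanges_rcons s b :
  nchanges (rcons s b) = (nchanges s + ((0 < size s)%N && (last b s != b)))%N.
Proof.
elim: s => [|a s IH] //=.
rewrite nchanges_cons [nchanges (a :: s)]nchanges_cons IH size_rcons /=.
by case: s IH => [|x s] IH /=; [rewrite addn0; case: (a != b) | lia].
Qed.

Lemma nchanges_rev s : nchanges (rev s) = nchanges s.
Proof.
elim: s => // a s IH.
by rewrite rev_cons nchanges_rcons IH size_rev last_rev nchanges_cons addnC eq_sym.
Qed.

(* A pair of adjacent signs changes in [s] exactly when it does not change in [altb s]. *)
Lemma nchanges_altb s : (nchanges (altb s) + nchanges s)%N = (size s).-1.
Proof.
elim: s => // b [|c s] // IH.
have -> : altb [:: b, c & s] = b :: map negb (altb (c :: s)) by [].
rewrite nchanges_cons [nchanges (b :: _)]nchanges_cons nchanges_map_negb.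
by move: IH => /=; case: b; case: c => /=; lia.
Qed.

Lemma odd_nchanges b t : odd (nchanges (b :: t)) = (b != last b t).
Proof.
elim: t b => [|c t IH] b; first by rewrite /= eqxx.
by rewrite nchanges_cons oddD IH /=; case: b; case: (last c t); case: c.
Qed.

Lemma nchanges_rev_altb s : (nchanges (rev (altb s)) + nchanges s)%N = (size s).-1.
Proof. by rewrite nchanges_rev nchanges_altb. Qed.

Lemma nchanges_altb_rev t : (nchanges (altb (rev t)) + nchanges t)%N = (size t).-1.
Proof. by rewrite -(nchanges_rev t) nchanges_altb size_rev. Qed.

Lemma head_rev_altb s : ~~ odd (size s).-1 -> head false (rev (altb s)) = last false s.
Proof. by move=> even_s; rewrite head_rev last_altb. Qed.

Lemma last_altb_rev t : ~~ odd (size t).-1 -> last false (altb (rev t)) = head false t.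
Proof. by move=> even_t; rewrite last_altb ?size_rev // last_rev. Qed.

Section SignSequences.
Variable R : realType.
Implicit Types (c d : seq R) (s t : seq bool).

Definition sgn_compat1 (x : R) (b : bool) := ((0 < x) ==> b) && ((x < 0) ==> ~~ b).

Lemma sgn_compat_cons x c b s :
  sgn_compat (x :: c) (b :: s) = sgn_compat1 x b && sgn_compat c s.
Proof. by []. Qed.

Arguments sgn_compat : simpl never.

Lemma sgn_compat1_nz x b : sgn_compat1 x b -> x != 0 -> b = (0 < x).
Proof.
case/andP=> pos_b neg_b x_neq0; have [x_lt0|x_gt0|x_eq0] := ltgtP x 0.
- by move: neg_b; rewrite x_lt0 => /negbTE.
- by move: pos_b; rewrite x_gt0.
- by rewrite x_eq0 eqxx in x_neq0.
Qed.

Lemma size_sgn_compat c s : sgn_compat c s -> size s = size c.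
Proof. by rewrite /sgn_compat all2E => /andP[/eqP ->]. Qed.

Lemma sgn_compat_pos c : sgn_compat c [seq 0 < x | x <- c].
Proof.
elim: c => // x c IH; rewrite sgn_compat_cons IH andbT.
by apply/andP; split; apply/implyP => // /lt_gtF ->.
Qed.

Lemma sgn_compat_nseq c b :
  ~~ has (fun x => x != 0) c -> sgn_compat c (nseq (size c) b).
Proof.
elim: c => // x c IH /=; rewrite negb_or negbK => /andP[/eqP -> /IH cb].
by rewrite sgn_compat_cons cb /sgn_compat1 ltxx.
Qed.

Lemma sgn_compat_rev c s : sgn_compat (rev c) (rev s) = sgn_compat c s.
Proof.
rewrite /sgn_compat !all2E !size_rev; case: eqP => //= /esym eq_size.
by rewrite -rev_zip // all_rev.
Qed.

Lemma sgn_compat_map_opp c s :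
  sgn_compat (map -%R c) (map negb s) = sgn_compat c s.
Proof.
elim: c s => [|x c IH] [|b s] //.
rewrite !map_cons !sgn_compat_cons IH /sgn_compat1 oppr_gt0 oppr_lt0 negbK.
by rewrite [X in X && _]andbC.
Qed.

Fixpoint altr c : seq R :=
  if c is x :: c' then x :: map -%R (altr c') else [::].

Lemma size_altr c : size (altr c) = size c.
Proof. by elim: c => //= x c IH; rewrite size_map IH. Qed.

Lemma nth_altr c i : (i < size c)%N -> nth 0 (altr c) i = (-1) ^+ i * nth 0 c i.
Proof.
elim: c i => [|x c IH] [|i] //= lt_i_c; first by rewrite mul1r.
by rewrite (nth_map 0) ?size_altr // IH // exprS mulN1r mulNr.
Qed.

Lemma sgn_compat_alt c s : sgn_compat (altr c) (altb s) = sgn_compat c s.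
Proof.
elim: c s => [|x c IH] [|b s] //.
by rewrite /= !sgn_compat_cons sgn_compat_map_opp IH.
Qed.

Definition dualr c := rev (altr c).

Lemma sgn_compat_dualr c s : sgn_compat (dualr c) (rev (altb s)) = sgn_compat c s.
Proof. by rewrite sgn_compat_rev sgn_compat_alt. Qed.

Lemma sgn_compat_dualrV c t : sgn_compat c (altb (rev t)) = sgn_compat (dualr c) t.
Proof. by rewrite -sgn_compat_alt altbK -sgn_compat_rev revK. Qed.

Lemma Splus_ub c s : sgn_compat c s -> (nchanges s <= Splus c)%N.
Proof.
move=> cs; have size_s : size s == size c by rewrite (size_sgn_compat cs).
exact: (leq_bigmax_cond (Tuple size_s)).
Qed.

Lemma Splus_ex c : exists2 s, sgn_compat c s & nchanges s = Splus c.
Proof.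
pose P (t : (size c).-tuple bool) := sgn_compat c t.
have c_pos : P (map_tuple (fun x => 0 < x) (in_tuple c)) := sgn_compat_pos c.
case: (@arg_maxnP _ _ P (fun t : (size c).-tuple bool => nchanges t) c_pos).
move=> t ct t_max.
exists t => //; apply/eqP; rewrite eqn_leq Splus_ub //=.
exact/bigmax_leqP.
Qed.

Lemma Sminus_lb c s : sgn_compat c s -> (Sminus c <= nchanges s)%N.
Proof.
move=> cs; have size_s : size s == size c by rewrite (size_sgn_compat cs).
rewrite /Sminus; have : Tuple size_s \in index_enum _ by rewrite mem_index_enum.
elim: (index_enum _) => // t r IH; rewrite inE big_cons => /orP[/eqP <- | in_r].
  by rewrite cs geq_minl.
by case: ifP => _; [rewrite geq_min IH ?orbT | exact: IH].
Qed.

Lemma Sminus_ex c : exists2 s, sgn_compat c s & nchanges s = Sminus c.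
Proof.
pose P (t : (size c).-tuple bool) := sgn_compat c t.
have c_pos : P (map_tuple (fun x => 0 < x) (in_tuple c)) := sgn_compat_pos c.
case: (@arg_minnP _ _ P (fun t : (size c).-tuple bool => nchanges t) c_pos).
move=> t ct t_min.
exists t => //; apply/eqP; rewrite eqn_leq Sminus_lb // andbT /Sminus.
elim/big_ind: _ => [||u /t_min //].
- apply: leq_trans (t_min _ c_pos) _.
  by rewrite -[X in (_ <= X)%N](size_map (fun x => 0 < x)) nchanges_le.
- by move=> x y; rewrite leq_min => -> ->.
Qed.

Lemma Splus_add_Sminus_dualr c : (Splus c + Sminus (dualr c))%N = (size c).-1.
Proof.
have [s cs max_s] := Splus_ex c; have [t dt min_t] := Sminus_ex (dualr c).
have /Sminus_lb le_ts : sgn_compat (dualr c) (rev (altb s)) by rewrite sgn_compat_dualr.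
have /Splus_ub le_st : sgn_compat c (altb (rev t)) by rewrite sgn_compat_dualrV.
have := nchanges_rev_altb s; have := nchanges_altb_rev t.
rewrite (size_sgn_compat cs) (size_sgn_compat dt) size_rev size_altr; lia.
Qed.

(* A zero coordinate in front may take the sign of the coordinate after it at no cost. *)
Lemma sgn_compat_head_nz d t : sgn_compat d t -> has (fun x => x != 0) d ->
  exists t', [/\ sgn_compat d t', (nchanges t' <= nchanges t)%N,
    last false t' = last false t & head false t' = (0 < head 0 [seq x <- d | x != 0])].
Proof.
elim: d t => [|x d IH] [|b u] //; rewrite sgn_compat_cons => /andP[xb du] /=.
have [x_eq0 | x_neq0] := eqVneq x 0; last first.
  by exists (b :: u); split; rewrite // ?sgn_compat_cons ?xb //; exact: sgn_compat1_nz.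
have size_d := size_sgn_compat du.
move=> nz_d; have [[|h u'] [du' le_u'u last_u' head_u']] := IH u du nz_d.
  by move/size_sgn_compat: du'; case: (d) nz_d.
exists [:: h, h & u']; split => //.
- by rewrite sgn_compat_cons du' x_eq0 /sgn_compat1 ltxx.
- by rewrite nchanges_cons /= eqxx add0n (leq_trans le_u'u) // nchanges_cons leq_addl.
- rewrite [LHS]last_u'; case: (u) size_d => [|? ?] // /esym/size0nil d_nil.
  by rewrite d_nil in nz_d.
Qed.

Lemma sgn_compat_last_nz d t : sgn_compat d t -> has (fun x => x != 0) d ->
  exists t', [/\ sgn_compat d t', (nchanges t' <= nchanges t)%N,
    head false t' = head false t & last false t' = (0 < last 0 [seq x <- d | x != 0])].
Proof.
move=> dt nz_d.
have [||t' [dt' le_t't last_t' head_t']] := @sgn_compat_head_nz (rev d) (rev t).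
- by rewrite sgn_compat_rev.
- by rewrite has_rev.
exists (rev t'); split.
- by rewrite -sgn_compat_rev revK.
- by rewrite nchanges_rev -(nchanges_rev t).
- by rewrite head_rev last_t' last_rev.
- by rewrite last_rev head_t' filter_rev head_rev.
Qed.

Lemma Sminus_odd_head d t : sgn_compat d t -> nchanges t = Sminus d ->
  odd (Sminus d) -> head false t = ~~ (0 < last 0 [seq x <- d | x != 0]).
Proof.
move=> dt min_t odd_min.
have nz_d : has (fun x => x != 0) d.
  apply: contraTT odd_min => /(sgn_compat_nseq true)/Sminus_lb.
  by rewrite nchanges_nseq leqn0 => /eqP ->.
have [t' [dt' le_t't head_t' last_t']] := sgn_compat_last_nz dt nz_d.
have min_t' : nchanges t' = Sminus d.
  by apply/eqP; rewrite eqn_leq -{1}min_t le_t't Sminus_lb.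
case: t' {le_t't} dt' head_t' last_t' min_t' => [|b u] dt' <- <- min_t'.
  by move/size_sgn_compat/esym/size0nil: dt' nz_d => ->.
by move: odd_min; rewrite -{}min_t' odd_nchanges {dt'} /=; case: (last b u); case: b.
Qed.

Lemma Splus_last_dualr c : ~~ odd (size c).-1 -> odd (Splus c) ->
  (exists s, [/\ sgn_compat c s, nchanges s = Splus c & last false s])
  <-> ~~ (0 < last 0 [seq x <- dualr c | x != 0]).
Proof.
move=> even_c odd_max; have sum := Splus_add_Sminus_dualr c.
have odd_min : odd (Sminus (dualr c)).
  by move: even_c odd_max; rewrite -sum oddD; case: (odd _); case: (odd _).
split=> [[s [cs max_s last_s]] | ].
- have dt : sgn_compat (dualr c) (rev (altb s)) by rewrite sgn_compat_dualr.
  have min_t : nchanges (rev (altb s)) = Sminus (dualr c).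
    by have := nchanges_rev_altb s; rewrite (size_sgn_compat cs); lia.
  by rewrite -(Sminus_odd_head dt min_t odd_min) head_rev_altb ?(size_sgn_compat cs).
- have [t dt min_t] := Sminus_ex (dualr c).
  have size_t : size t = size c by rewrite (size_sgn_compat dt) size_rev size_altr.
  rewrite -(Sminus_odd_head dt min_t odd_min) => head_t.
  exists (altb (rev t)); split.
  + by rewrite sgn_compat_dualrV.
  + by have := nchanges_altb_rev t; rewrite size_t; lia.
  + by rewrite last_altb_rev ?size_t.
Qed.

Lemma not_open_iff_closed_dualr c m : size c = (2 * m).+1 -> odd m ->
  ~ ((Splus c <= m)%N /\ (Splus c = m -> exists s : (size c).-tuple bool,
        [/\ sgn_compat c s, nchanges s = Splus c & last false s = true]))
  <-> (Sminus (dualr c) <= m)%N /\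
      (Sminus (dualr c) = m -> 0 < last 0 [seq x <- dualr c | x != 0]).
Proof.
move=> size_c odd_m.
have sum : (Splus c + Sminus (dualr c) = 2 * m)%N by rewrite Splus_add_Sminus_dualr size_c.
have [lt_m | gt_m | eq_m] := ltngtP (Splus c) m.
- split=> [not_open | [le_m _]]; last lia.
  by exfalso; apply: not_open; split=> [|eq_m]; lia.
- by split=> [_ | _ [le_m _]]; [split=> [|eq_m] | ]; lia.
have even_c : ~~ odd (size c).-1 by rewrite size_c /= oddM.
have [max_last last_max] := Splus_last_dualr even_c (etrans (congr1 odd eq_m) odd_m).
split=> [not_open | [_ pos_last] [_ /(_ eq_m) [s [cs max_s last_s]]]].
- split=> [|_]; first lia.
  apply/negPn/negP => /last_max [s [cs max_s last_s]]; apply: not_open.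
  split=> [|_]; first lia.
  have size_s : size s == size c by rewrite (size_sgn_compat cs).
  by exists (Tuple size_s).
- have : ~~ (0 < last 0 [seq x <- dualr c | x != 0]) by apply: max_last; exists s.
  by rewrite pos_last //; lia.
Qed.
End SignSequences.

Section OppositeBasis.
Variables (R : realType) (N : nat).
Implicit Types (E : 'M[R]_N) (v : 'cV[R]_N).

Lemma size_coords E v : size (coords E v) = N.
Proof. by rewrite size_map size_enum_ord. Qed.

Lemma nth_coords E v (i : 'I_N) : nth 0 (coords E v) i = (invmx E *m v) i 0.
Proof. by rewrite (nth_map i) ?size_enum_ord // nth_ord_enum. Qed.

Definition rev_sign_mx : 'M[R]_N := \matrix_(k, j) ((-1) ^+ j * (k == rev_ord j)%:R).

Lemma opp_basisE E : opp_basis E = E *m rev_sign_mx.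
Proof.
apply/matrixP => i j; rewrite !mxE (bigD1 (rev_ord j)) //= big1 => [|k /negbTE k_neq].
  by rewrite !mxE eqxx mulr1 addr0 mulrC.
by rewrite !mxE k_neq !mulr0.
Qed.

Lemma rev_sign_mxMtr : rev_sign_mx *m rev_sign_mx^T = 1%:M.
Proof.
apply/matrixP => k l; rewrite !mxE (bigD1 (rev_ord k)) //= big1 => [|j /negbTE j_neq].
  by rewrite !mxE rev_ordK eqxx mulr1 addr0 mulrA -expr2 sqrr_sign mul1r eq_sym.
rewrite !mxE; case: (eqVneq k (rev_ord j)) => [k_eq | _]; last by rewrite !mulr0 mul0r.
by rewrite k_eq rev_ordK eqxx in j_neq.
Qed.

Lemma coords_opp_basis_mx E v : E \in unitmx ->
  invmx (opp_basis E) *m v = rev_sign_mx^T *m (invmx E *m v).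
Proof.
move=> E_unit; have P_unit := (mulmx1_unit rev_sign_mxMtr).1.
have opp_unit : opp_basis E \in unitmx by rewrite opp_basisE unitmx_mul E_unit.
apply: (canLR (mulKmx opp_unit)).
by rewrite opp_basisE -mulmxA (mulmxA rev_sign_mx) rev_sign_mxMtr mul1mx mulKVmx.
Qed.

Lemma coords_opp_basis E v : E \in unitmx -> ~~ odd N.-1 ->
  coords (opp_basis E) v = dualr (coords E v).
Proof.
move=> E_unit even_N; apply: (@eq_from_nth _ 0).
  by rewrite size_rev size_altr !size_coords.
move=> k; rewrite size_coords => lt_kN; pose i := Ordinal lt_kN.
rewrite -[k]/(nat_of_ord i) nth_coords coords_opp_basis_mx // mxE.
rewrite (bigD1 (rev_ord i)) //= big1 => [|j /negbTE j_neq]; last first.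
  by rewrite !mxE j_neq mulr0 mul0r.
rewrite !mxE eqxx mulr1 addr0 nth_rev size_altr size_coords //.
rewrite nth_altr ?size_coords; last exact: rev_ord_proof i.
rewrite -[(N - k.+1)%N]/(nat_of_ord (rev_ord i)) nth_coords.
congr (_ * _); last by rewrite mxE.
rewrite -signr_odd -[in RHS]signr_odd; congr (_ ^+ _).
have : (rev_ord i + i)%N = N.-1 by rewrite /=; lia.
by move/(congr1 odd); rewrite oddD (negbTE even_N); case: (odd i); case: (odd _).
Qed.
End OppositeBasis.

Theorem lemma5p3 (R : realType) (n : nat) (E : 'M[R]_((4 * n).-1)) :
  (0 < n)%N -> is_Jbasis E -> 0 < \det E ->
  forall v : 'cV[R]_((4 * n).-1),
    ~ Hopen E v <-> Hclosed (opp_basis E) v.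
Proof.
move=> n_gt0 /andP[E_unit _] _ v.
have even_N : ~~ odd (4 * n).-1.-1.
  have -> : (4 * n).-1.-1 = (2 * (2 * n).-1)%N by lia.
  by rewrite oddM.
rewrite /Hopen /Hclosed coords_opp_basis //.
apply: not_open_iff_closed_dualr; first by rewrite size_coords; lia.
have -> : (2 * n).-1 = (2 * n.-1).+1 by lia.
by rewrite /= oddM.
Qed.
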